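(* Let $E$ be a set and let $T$ be a set of clauses over $E$, where a clause is a pair written $X\Rightarrow Y$ with $X,Y\subseteq E$, standing for the formula $\bigwedge X\Rightarrow\bigvee Y$. Define the event structure $(E,\vdash_T)$ by: $X\vdash_T Y$ iff for every $Z\subseteq E$ with $(Y\Rightarrow Z)\in T$ we have $X\cap Z\neq\emptyset$. Then the set of left-closed configurations of $(E,\vdash_T)$ equals the set of models of $T$, i.e. the set of $m\subseteq E$ such that for every clause $(X\Rightarrow Y)\in T$, $X\subseteq m$ implies $Y\cap m\neq\emptyset$.
   Context: An event structure is a pair $(E,\vdash)$ with $\vdash\subseteq\mathcal{P}(E)\times\mathcal{P}(E)$. A set $X\subseteq E$ is a left-closed configuration iff for every $Y\subseteq X$ there exists $Z\subseteq X$ with $Z\vdash Y$. *)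

Definition incl {E : Type} (X Y : E -> Prop) : Prop := forall e, X e -> Y e.

Definition meets {E : Type} (X Y : E -> Prop) : Prop := exists e, X e /\ Y e.

Definition enabling (E : Type) : Type := (E -> Prop) -> (E -> Prop) -> Prop.

Definition left_closed_config {E : Type} (vdash : enabling E) (X : E -> Prop) : Prop :=
  forall Y, incl Y X -> exists Z, incl Z X /\ vdash Z Y.

Definition clause (E : Type) : Type := ((E -> Prop) * (E -> Prop))%type.
Definition theory (E : Type) : Type := clause E -> Prop.

Definition vdash_T {E : Type} (T : theory E) : enabling E :=
  fun X Y => forall Z, T (Y, Z) -> meets X Z.

Definition model {E : Type} (T : theory E) (m : E -> Prop) : Prop :=
  forall X Y, T (X, Y) -> incl X m -> meets Y m.


(* Enabling by [vdash_T T] is monotone in its left argument, so a left-closed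
   configuration [m] can always take [m] itself as the enabling set: [m] is a
   configuration iff [m |-_T Y] for every [Y ⊆ m], which unfolds to the model
   condition. *)

Lemma vdash_T_incl_l {E : Type} (T : theory E) (X X' Y : E -> Prop) :
  incl X X' -> vdash_T T X Y -> vdash_T T X' Y.
Proof.
  intros HX HXY Z HT. destruct (HXY Z HT) as [e [HXe HZe]].
  exists e. split; auto.
Qed.

Lemma left_closed_config_vdash_T {E : Type} (T : theory E) (m : E -> Prop) :
  left_closed_config (vdash_T T) m <-> forall Y, incl Y m -> vdash_T T m Y.
Proof.
  split.
  - intros Hm Y HY. destruct (Hm Y HY) as [Z [HZ HZY]].
    exact (vdash_T_incl_l T Z m Y HZ HZY).
  - intros Hm Y HY. exists m. split; [intros e He; exact He | exact (Hm Y HY)].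
Qed.

Lemma meets_sym {E : Type} (X Y : E -> Prop) : meets X Y -> meets Y X.
Proof. intros [e [HX HY]]. exists e. split; assumption. Qed.

Theorem mainTheorem4 (E : Type) (T : theory E) (m : E -> Prop) :
  left_closed_config (vdash_T T) m <-> model T m.
Proof.
  pose proof (left_closed_config_vdash_T T m) as [to_vdash of_vdash]. split.
  - intros Hm X Y HT HX. exact (meets_sym m Y (to_vdash Hm X HX Y HT)).
  - intros Hm. apply of_vdash. intros Y HY Z HT. exact (meets_sym Z m (Hm Y Z HT HY)).
Qed.
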